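(* Consider the resilient constrained consensus algorithm described in the context, with at most $f$ Byzantine agents. Suppose $\bigcap_{i\in\mathcal H}\mathcal X_i=\{x^*\}$ and the set of normal agents $\mathcal H$ is $k$-redundant. Suppose $\mu>0$ is such that for every $x\in\mathbb R^m$ and every $\mathcal S\subseteq\mathcal H$ with $|\mathcal S|\ge n-k$, $$\max_{i\in\mathcal S}\mathrm{dist}(x,\mathcal X_i)\ge\mu\,\mathrm{dist}\Big(x,\bigcap_{i\in\mathcal S}\mathcal X_i\Big).$$ If $k>\frac{4f}{\mu^2}+(2f-1)$, then at every time $t$ $$\sum_{i\in\mathcal H}\phi_i(t)\ge\Big(\frac{\mu^2}{2}k-\frac{4f+2f\mu^2-\mu^2}{2}\Big)V(t).$$
   Context: Setting: There are $n$ agents $\mathcal N=\{1,\dots,n\}$ on a complete communication graph. A known integer $f\ge0$ is given. The agents are partitioned into normal agents $\mathcal H$ and Byzantine agents $\mathcal F$ with $|\mathcal F|\le f$. Each $i\in\mathcal H$ has a closed convex $\mathcal X_i\subseteq\mathbb R^m$. Each normal agent's state is constrained to lie in $\mathcal X_i$; in particular $x_i(0)\in\mathcal X_i$. Algorithm: normal agent $i$ has state $x_i(t)\in\mathbb R^m$ and at time $t$ receives $x_{ji}(t)$ from each $j\ne i$. If $j\in\mathcal H$, then $x_{ji}(t)=x_j(t)$. If $j\in\mathcal F$, the value is arbitrary and may differ per recipient. Agent $i$ discards the $f$ received vectors with largest $\|x_i(t)-x_{ji}(t)\|$, with ties broken arbitrarily. The remaining $n-f-1$ senders form $\mathcal M_i(t)$.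 The update is $$x_i(t+1)=\mathrm P_{\mathcal X_i}\Big[x_i(t)+\alpha\sum_{j\in\mathcal M_i(t)}(x_{ji}(t)-x_i(t))\Big],$$ with $\alpha>0$ and $\mathrm P_{\mathcal C}$ the Euclidean projection. Notation: - $\mathrm{dist}(x,\mathcal C)=\|x-\mathrm P_{\mathcal C}[x]\|$; - $\phi_i(t)=\big\langle x_i(t)-x^*,\sum_{j\in\mathcal M_i(t)}(x_i(t)-x_{ji}(t))\big\rangle$; - $V(t)=\sum_{i\in\mathcal H}\|x_i(t)-x^*\|^2$; - $\mathcal H$ is $k$-redundant if for every $\mathcal S\subseteq\mathcal H$ with $|\mathcal S|\ge n-k$ we have $\bigcap_{i\in\mathcal S}\mathcal X_i=\bigcap_{i\in\mathcal H}\mathcal X_i$. *)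

From HB Require Import structures.
From mathcomp Require Import all_boot all_order all_algebra.
From mathcomp Require Import all_classical all_reals all_analysis.
Set Implicit Arguments. Unset Strict Implicit. Unset Printing Implicit Defensive.
Import Order.TTheory GRing.Theory Num.Theory.
Import numFieldNormedType.Exports.
Local Open Scope classical_set_scope.
Local Open Scope ring_scope.

Section Defs.
Variables (R : realType) (m : nat).
Local Notation vec := 'rV[R]_m.

Definition dotv (u v : vec) : R := \sum_(k < m) u ord0 k * v ord0 k.
Definition enorm (u : vec) : R := Num.sqrt (dotv u u).

Definition is_convex (C : set vec) : Prop :=
  forall x y, C x -> C y -> forall l : R, 0 <= l <= 1 ->
    C (l *: x + (1 - l) *: y).

Definition is_proj (C : set vec) (x p : vec) : Prop :=
  C p /\ forall y, C y -> enorm (x - p) <= enorm (x - y).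

Definition dist (x : vec) (C : set vec) : R := inf [set enorm (x - y) | y in C].

Definition bigcapS (n : nat) (X : 'I_n -> set vec) (S : {set 'I_n}) : set vec :=
  [set y | forall i, i \in S -> X i y].

Definition k_redundant (n k : nat) (X : 'I_n -> set vec) (H : {set 'I_n}) : Prop :=
  forall S : {set 'I_n}, S \subset H -> (n - k <= #|S|)%N ->
    bigcapS X S = bigcapS X H.

(* Trimming rule of normal agent i at a given time: M is the set of remaining
   senders after discarding the f received vectors (among those from j <> i)
   farthest from x_i, ties broken arbitrarily. msg j = x_{ji}. *)
Definition trimmed (n f : nat) (i : 'I_n) (xi : vec) (msg : 'I_n -> vec)
    (M : {set 'I_n}) : Prop :=
  M \subset [set j | j != i] /\ #|M| = (n - f - 1)%N /\
  forall j j', j \in M -> j' != i -> j' \notin M ->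
    enorm (xi - msg j) <= enorm (xi - msg j').

Definition phi (n : nat) (xstar xi : vec) (msg : 'I_n -> vec) (M : {set 'I_n}) : R :=
  dotv (xi - xstar) (\sum_(j in M) (xi - msg j)).

Definition Vfun (n : nat) (H : {set 'I_n}) (xstar : vec) (x : 'I_n -> vec) : R :=
  \sum_(i in H) enorm (x i - xstar) ^+ 2.

End Defs.

From HB Require Import structures.
From mathcomp Require Import all_boot all_order all_algebra.
From mathcomp Require Import all_classical all_reals all_analysis.
From mathcomp Require Import ring lra zify.
Set Implicit Arguments. Unset Strict Implicit. Unset Printing Implicit Defensive.
Import Order.TTheory GRing.Theory Num.Theory.
Import numFieldNormedType.Exports.
Local Open Scope classical_set_scope.
Local Open Scope ring_scope.

(* Write a_i = x_i - x^*.  Since sum_{i,j in H} <a_i, x_i - x_j> = 1/2 sum_{i,j in H} |x_i - x_j|^2,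
   it suffices to bound phi_i(t) from below, for each normal agent i, by
   <a_i, sum_{j in H} (x_i - x_j)> - 1/2 sum_{j in H} |x_i - x_j|^2 + c |a_i|^2,
   c the constant of the claim.
   Compared with the sum over all of H, phi_i misses the (at most f) discarded normal agents
   and contains at most as many Byzantine values; by the trimming rule each Byzantine value is
   closer to x_i than every discarded normal one, so with Young's inequality
   |<a, v>| <= |a|^2 + |v|^2/4 both defects together cost at most 2 f |a_i|^2.
   By k-redundancy and the regularity constant mu, fewer than n - k normal agents j satisfy
   |x_i - x_j| < mu |a_i|: otherwise their sets X_j, which intersect in {x^*} alone, would all
   pass closer to x_i than mu |x_i - x^*|.  Hence at least k + 1 - 2f of the kept normal
   agents are that far from x_i, contributing (k + 1 - 2f) mu^2 |a_i|^2 / 2. *)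

Section InnerProduct.
Variables (R : realType) (m : nat).
Local Notation vec := 'rV[R]_m.

Lemma dotvC (u v : vec) : dotv u v = dotv v u.
Proof. by apply: eq_bigr => k _; rewrite mulrC. Qed.

Lemma dotvDr (u v w : vec) : dotv u (v + w) = dotv u v + dotv u w.
Proof. by rewrite /dotv -big_split; apply: eq_bigr => k _; rewrite mxE mulrDr. Qed.

Lemma dotvNr (u v : vec) : dotv u (- v) = - dotv u v.
Proof. by rewrite /dotv -sumrN; apply: eq_bigr => k _; rewrite mxE mulrN. Qed.

Lemma dotvBr (u v w : vec) : dotv u (v - w) = dotv u v - dotv u w.
Proof. by rewrite dotvDr dotvNr. Qed.

Lemma dotvBl (u v w : vec) : dotv (v - w) u = dotv v u - dotv w u.
Proof. by rewrite dotvC dotvBr !(dotvC u). Qed.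

Lemma dotvDl (u v w : vec) : dotv (v + w) u = dotv v u + dotv w u.
Proof. by rewrite dotvC dotvDr !(dotvC u). Qed.

Lemma dotv_sumr (u : vec) (I : finType) (P : pred I) (F : I -> vec) :
  dotv u (\sum_(j | P j) F j) = \sum_(j | P j) dotv u (F j).
Proof.
rewrite /dotv; under eq_bigr => k _ do rewrite summxE mulr_sumr.
by rewrite exchange_big.
Qed.

Lemma dotvv_ge0 (u : vec) : 0 <= dotv u u.
Proof. by apply: sumr_ge0 => k _; rewrite -expr2 sqr_ge0. Qed.

Lemma enorm_sq (u : vec) : enorm u ^+ 2 = dotv u u.
Proof. by rewrite /enorm sqr_sqrtr // dotvv_ge0. Qed.

Lemma enorm_ge0 (u : vec) : 0 <= enorm u.
Proof. exact: sqrtr_ge0. Qed.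

Lemma dotv0r (u : vec) : dotv u 0 = 0.
Proof. by rewrite /dotv big1 // => k _; rewrite mxE mulr0. Qed.

Lemma enorm0 : enorm (0 : vec) = 0.
Proof. by rewrite /enorm dotv0r sqrtr0. Qed.

Lemma ler_norm_dotv (a v : vec) :
  `|dotv a v| <= enorm a ^+ 2 + enorm v ^+ 2 / 4.
Proof.
rewrite !enorm_sq ler_norml; apply/andP; split.
- have := dotvv_ge0 (a + a + v).
  by rewrite !dotvDl !dotvDr (dotvC v a); lra.
- have := dotvv_ge0 (a + a - v).
  by rewrite !dotvBl !dotvBr !dotvDl !dotvDr (dotvC v a); lra.
Qed.

Lemma sum_dotv_sub (I : finType) (A : {set I}) (x : I -> vec) (z : vec) :
  \sum_(i in A) \sum_(j in A) dotv (x i - z) (x i - x j) =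
  \sum_(i in A) \sum_(j in A) enorm (x i - x j) ^+ 2 / 2.
Proof.
have sym i j : enorm (x i - x j) ^+ 2 =
    dotv (x i - z) (x i - x j) + dotv (x j - z) (x j - x i).
  have sub_z u v : u - v = (u - z) - (v - z) by rewrite opprB addrA subrK.
  rewrite (sub_z (x i) (x j)) (sub_z (x j) (x i)) enorm_sq.
  move: (x i - z) (x j - z) => a b.
  by rewrite !dotvBl !dotvBr (dotvC b); lra.
under [RHS]eq_bigr => i _ do under eq_bigr => j _ do rewrite sym mulrDl.
under [RHS]eq_bigr => i _ do rewrite big_split.
rewrite big_split /= [X in _ + X]exchange_big -big_split /=.
by apply: eq_bigr => i _; rewrite -big_split; apply: eq_bigr => j _ /=; field.
Qed.

Lemma dist_le_enorm (y z : vec) (C : set vec) : C z -> dist y C <= enorm (y - z).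
Proof.
move=> Cz; apply: ge_inf; last by exists z.
by exists 0 => r [w _ <-]; exact: enorm_ge0.
Qed.

Lemma dist_set1 (y z : vec) : dist y [set z] = enorm (y - z).
Proof. by rewrite /dist image_set1 inf1. Qed.

End InnerProduct.

Section Counting.
Variable R : realDomainType.

Lemma ler_sum_dominated (I : finType) (B D : {set I}) (g h : I -> R) :
  (#|B| <= #|D|)%N -> (forall j, j \in D -> 0 <= h j) ->
  (forall j j', j \in B -> j' \in D -> g j <= h j') ->
  \sum_(j in B) g j <= \sum_(j in D) h j.
Proof.
move=> BD h_ge0 gh; have [D0 | [j0 Dj0]] := set_0Vmem D.
  by move: BD; rewrite D0 cards0 leqn0 cards_eq0 => /eqP ->; rewrite !big_set0.
have [jm Djm jm_min] := @arg_minP _ R I j0 (mem D) h Dj0.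
apply: (@le_trans _ _ (h jm *+ #|B|)).
  by rewrite -sumr_const; apply: ler_sum => j Bj; apply: gh.
apply: (@le_trans _ _ (h jm *+ #|D|)); first exact: ler_wpMn2l (h_ge0 _ Djm) _ _ BD.
by rewrite -sumr_const; apply: ler_sum => j Dj; apply: jm_min.
Qed.

Lemma ler_card_level_sum (I : finType) (A : {set I}) (g : I -> R) (c : R) :
  (forall j, j \in A -> 0 <= g j) ->
  c *+ #|[set j in A | c <= g j]| <= \sum_(j in A) g j.
Proof.
move=> g_ge0; rewrite (big_setID [set j | c <= g j]) /= -setIdE.
apply: ler_wpDr; first by apply: sumr_ge0 => j /setDP[/g_ge0].
by rewrite -sumr_const; apply: ler_sum => j; rewrite inE => /andP[].
Qed.

End Counting.

Section AgentBound.
Variables (R : realType) (m n f k : nat) (mu : R).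
Variables (H : {set 'I_n}) (X : 'I_n -> set 'rV[R]_m) (xstar : 'rV[R]_m).
Hypotheses (card_faulty : (#|~: H| <= f)%N) (capH : bigcapS X H = [set xstar]).
Hypotheses (redundant : k_redundant k X H) (mu_gt0 : 0 < mu).
Hypothesis mu_bound : forall (y : 'rV[R]_m) (S : {set 'I_n}),
  S \subset H -> (n - k <= #|S|)%N ->
  mu * dist y (bigcapS X S) <= \big[Num.max/0]_(j in S) dist y (X j).

Lemma card_close_lt (y : 'rV[R]_m) (p : 'I_n -> 'rV[R]_m) :
  (forall j, j \in H -> X j (p j)) -> 0 < enorm (y - xstar) ->
  (#|[set j in H | (enorm (y - p j) < mu * enorm (y - xstar))%R]| < n - k)%N.
Proof.
move=> p_in y_ne; set S := [set j in H | _]; rewrite ltnNge; apply/negP => S_big.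
have S_H : S \subset H by rewrite /S setIdE subsetIl.
have := mu_bound y S_H S_big; rewrite (redundant S_H S_big) capH dist_set1.
apply/negP; rewrite -ltNge; apply: bigmax_lt => [|j]; first exact: mulr_gt0.
by rewrite inE => /andP[/p_in/(dist_le_enorm y)]; apply: le_lt_trans.
Qed.

Variables (x msg : 'I_n -> 'rV[R]_m) (M : {set 'I_n}) (i : 'I_n).
Hypotheses (iH : i \in H) (x_in : forall j, j \in H -> X j (x j)).
Hypothesis msg_normal : forall j, j \in H -> j != i -> msg j = x j.
Hypothesis trim : trimmed f i (x i) msg M.

Local Notation a := (x i - xstar).
Local Notation discarded := ((H :\: M) :\ i).

Lemma notin_trimmed : i \notin M.
Proof. by have [/fintype.subsetP M_i _] := trim; apply/negP => /M_i; rewrite in_setE /= eqxx. Qed.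

Lemma card_discarded : (#|M :\: H| <= #|discarded|)%N /\ (#|discarded| <= f)%N.
Proof.
have [_ [card_M _]] := trim.
have := cardsID M H; have := cardsID H M; rewrite finset.setIC.
have : #|H :\: M| = #|discarded|.+1 by rewrite (cardsD1 i) !inE notin_trimmed iH.
have : (#|M :\: H| <= #|~: H|)%N by rewrite finset.setDE subset_leq_card ?finset.subsetIr.
have : (#|H| + #|~: H| = n)%N by rewrite cardsC card_ord.
lia.
Qed.

Lemma phi_split : phi xstar (x i) msg M =
  \sum_(j in H :&: M) dotv a (x i - x j) + \sum_(j in M :\: H) dotv a (x i - msg j).
Proof.
rewrite /phi dotv_sumr (big_setID H) /= finset.setIC; congr (_ + _).
apply: eq_bigr => j /setIP[jH jM]; rewrite msg_normal //.
by have [/fintype.subsetP M_i _] := trim; have := M_i j jM; rewrite in_setE.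
Qed.

Lemma faulty_sum_ge :
  - \sum_(j in discarded) (enorm a ^+ 2 + enorm (x i - x j) ^+ 2 / 4) <=
  \sum_(j in M :\: H) dotv a (x i - msg j).
Proof.
have [_ [_ trim_le]] := trim.
rewrite lerNl -sumrN; apply: ler_sum_dominated => [|j _|j j'].
- exact: card_discarded.1.
- by rewrite addr_ge0 ?divr_ge0 ?sqr_ge0.
rewrite !inE => /andP[_ jM] /and3P[j'i j'M j'H].
have /ler_normlP[young _] := ler_norm_dotv a (x i - msg j).
apply: le_trans young _.
rewrite lerD2l ler_wpM2r ?invr_ge0 // ler_sqr ?nnegrE ?enorm_ge0 //.
by rewrite -(msg_normal j'H j'i); exact: trim_le.
Qed.

Lemma far_sum_ge :
  (k%:R + 1 - 2 * f%:R) * (mu ^+ 2 * enorm a ^+ 2) <=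
  \sum_(j in H :&: M) enorm (x i - x j) ^+ 2.
Proof.
have := enorm_ge0 a; rewrite le_eqVlt => /predU1P[a0 | a_gt0].
  by rewrite -a0 expr0n !mulr0 sumr_ge0 // => j _; rewrite sqr_ge0.
have close_lt := card_close_lt x_in a_gt0.
set c := mu * enorm a in close_lt *; have c_gt0 : 0 < c by rewrite mulr_gt0.
set far := [set j in H | c <= enorm (x i - x j)].
have card_far : (#|far| + #|[set j in H | (enorm (x i - x j) < c)%R]| = #|H|)%N.
  rewrite -(cardsID [set j | c <= enorm (x i - x j)] H) -setIdE; congr (_ + _).
  by apply: eq_card => j; rewrite !inE ltNge andbC.
have i_far : i \notin far by rewrite !inE subrr enorm0 lt_geF ?andbF.
have far_D : (#|far :\: M| <= #|discarded|)%N.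
  apply/subset_leq_card/fintype.subsetP => j /setDP[j_far jM].
  have ji : j != i by apply: contraNneq i_far => <-.
  by move: j_far; rewrite !inE ji jM => /andP[-> _].
have far_M := cardsID M far; have [_ card_D] := card_discarded.
have card_H : (#|H| + #|~: H| = n)%N by rewrite cardsC card_ord.
have far_kept : (k + 1 <= #|far :&: M| + 2 * f)%N by lia.
have far_kept_sq : far :&: M = [set j in H :&: M | c ^+ 2 <= enorm (x i - x j) ^+ 2].
  apply/setP => j; rewrite !inE ler_sqr ?nnegrE ?enorm_ge0 ?(ltW c_gt0) //.
  by rewrite andbAC.
rewrite far_kept_sq in far_kept.
apply: le_trans (ler_card_level_sum (c ^+ 2) (fun j _ => sqr_ge0 (enorm (x i - x j)))).
have -> : mu ^+ 2 * enorm a ^+ 2 = c ^+ 2 by rewrite exprMn.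
rewrite -[c ^+ 2 *+ _]mulr_natl ler_wpM2r ?sqr_ge0 //.
by move: far_kept; rewrite -(ler_nat R) !natrD; lra.
Qed.

Lemma agent_bound :
  ((k%:R + 1 - 2 * f%:R) * mu ^+ 2 / 2 - 2 * f%:R) * enorm a ^+ 2 <=
  phi xstar (x i) msg M - \sum_(j in H) dotv a (x i - x j)
    + \sum_(j in H) enorm (x i - x j) ^+ 2 / 2.
Proof.
have split_H (F : 'I_n -> R) :
    \sum_(j in H) F j = \sum_(j in H :&: M) F j + (F i + \sum_(j in discarded) F j).
  by rewrite (big_setID M) /= [in X in _ + X](big_setD1 i) // !inE notin_trimmed iH.
rewrite phi_split !split_H subrr dotv0r enorm0 expr0n mul0r -!mulr_suml.
have young_D : \sum_(j in discarded) dotv a (x i - x j) <=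
    \sum_(j in discarded) (enorm a ^+ 2 + enorm (x i - x j) ^+ 2 / 4).
  by apply: ler_sum => j _; have /ler_normlP[_] := ler_norm_dotv a (x i - x j).
have card_D : enorm a ^+ 2 *+ #|discarded| <= f%:R * enorm a ^+ 2.
  by rewrite mulr_natl; exact: ler_wpMn2l (sqr_ge0 _) _ _ card_discarded.2.
have sum_D : \sum_(j in discarded) (enorm a ^+ 2 + enorm (x i - x j) ^+ 2 / 4) =
    enorm a ^+ 2 *+ #|discarded| + (\sum_(j in discarded) enorm (x i - x j) ^+ 2) / 4.
  by rewrite big_split sumr_const mulr_suml.
have := faulty_sum_ge; have := far_sum_ge; rewrite sum_D in young_D *.
have -> : ((k%:R + 1 - 2 * f%:R) * mu ^+ 2 / 2 - 2 * f%:R) * enorm a ^+ 2 =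
    (k%:R + 1 - 2 * f%:R) * (mu ^+ 2 * enorm a ^+ 2) / 2 - 2 * (f%:R * enorm a ^+ 2).
  by field.
lra.
Qed.

End AgentBound.

Theorem lemma3 (R : realType) (m n f k : nat) (alpha mu : R)
  (H : {set 'I_n}) (X : 'I_n -> set 'rV[R]_m) (xstar : 'rV[R]_m)
  (x : nat -> 'I_n -> 'rV[R]_m)
  (msg : nat -> 'I_n -> 'I_n -> 'rV[R]_m)   (* msg t j i = x_{ji}(t) *)
  (M : nat -> 'I_n -> {set 'I_n}) :
  (f < n)%N ->
  (#|~: H| <= f)%N ->
  (forall i, i \in H -> closed (X i) /\ is_convex (X i)) ->
  0 < alpha ->
  (forall t i j, i \in H -> j \in H -> j != i -> msg t j i = x t j) ->
  (forall t i, i \in H -> trimmed f i (x t i) (fun j => msg t j i) (M t i)) ->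
  (forall i, i \in H -> X i (x 0%N i)) ->
  (forall t i, i \in H ->
     is_proj (X i)
       (x t i + alpha *: \sum_(j in M t i) (msg t j i - x t i))
       (x t.+1 i)) ->
  bigcapS X H = [set xstar] ->
  k_redundant k X H ->
  0 < mu ->
  (forall (y : 'rV[R]_m) (S : {set 'I_n}), S \subset H -> (n - k <= #|S|)%N ->
     \big[Num.max/0]_(i in S) dist y (X i) >= mu * dist y (bigcapS X S)) ->
  (k%:R > 4 * f%:R / mu ^+ 2 + (2 * f%:R - 1)) ->
  forall t,
    \sum_(i in H) phi xstar (x t i) (fun j => msg t j i) (M t i) >=
    (mu ^+ 2 / 2 * k%:R - (4 * f%:R + 2 * f%:R * mu ^+ 2 - mu ^+ 2) / 2)
      * Vfun H xstar (x t).
Proof.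
move=> _ card_faulty _ _ msg_normal trim x0_in proj capH redundant mu_gt0 mu_bound _ t.
have x_in s j : j \in H -> X j (x s j).
  by case: s => [|s] jH; [exact: x0_in | case: (proj s j jH)].
have bound i (iH : i \in H) := agent_bound card_faulty capH redundant mu_gt0 mu_bound
  iH (x_in t) (msg_normal t i ^~ iH) (trim t i iH).
have -> : mu ^+ 2 / 2 * k%:R - (4 * f%:R + 2 * f%:R * mu ^+ 2 - mu ^+ 2) / 2 =
    (k%:R + 1 - 2 * f%:R) * mu ^+ 2 / 2 - 2 * f%:R by field.
rewrite /Vfun mulr_sumr; apply: le_trans (ler_sum _ bound) _.
by rewrite !big_split /= sumrN sum_dotv_sub subrK.
Qed.
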